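(* Let $r\colon\mathcal M_3\to\mathcal M_3$ be the reflection functor interchanging the roles of $\mathcal B^1$ and $\mathcal B^2$. For a diad $D^\bullet$ as below, $T^{-1}rT(D^\bullet)$ is isomorphic to the diad $$\ker(a_R)\xrightarrow{(a_L',b_L')}\mathcal A\oplus H(D^\bullet)\xrightarrow{(a_R',b_R')}\operatorname{coker}(a_L),$$ where $a_L'\colon\ker(a_R)\to\mathcal A$ is the natural inclusion, $a_R'\colon\mathcal A\to\operatorname{coker}(a_L)$ is the natural projection, $b_L'=h\circ(a_L',0)$ (viewing $(a_L',0)\colon\ker(a_R)\to\ker R\subset\mathcal A\oplus\mathcal B$), and $b_R'$ is the factorization of $-k$ through $\operatorname{coker}(a_L)\subset\operatorname{coker}(L)$.
   Context: Let $\mathcal A$ be an abelian category. A diad is a complex $D^\bullet=(\mathcal F_L\xrightarrow{L=(a_L,b_L)}\mathcal A\oplus\mathcal B\xrightarrow{R=(a_R,b_R)}\mathcal F_R)$ in $\mathcal A$ with $a_L$ injective and $a_R$ surjective; $H(D^\bullet)=\ker R/\operatorname{im}L$, $h\colon\ker R\to H(D^\bullet)$ the projection and $k\colon H(D^\bullet)\to\operatorname{coker}L$ the inclusion. A triad is a short exact sequence $0\to\mathcal F_-\xrightarrow{(c_-,d^1_-,d^2_-)}\mathcal A\oplus\mathcal B^1\oplus\mathcal B^2\xrightarrow{(c_+,d^1_+,d^2_+)}\mathcal F_+\to0$ such that for $i=1,2$, $(c_-,d^i_-)$ is injective and $(c_+,d^i_+)$ surjective. $T$ sends a diad to the triad $0\to\ker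 R\xrightarrow{(\iota_A,\iota_B,h)}\mathcal A\oplus\mathcal B\oplus H(D^\bullet)\xrightarrow{(\pi_A,\pi_B,-k)}\operatorname{coker}L\to0$, where $(\iota_A,\iota_B)$ is the inclusion of $\ker R$ and $(\pi_A,\pi_B)$ the projection to $\operatorname{coker}L$; $T^{-1}$ sends a triad to the diad $\ker(d^2_-)\xrightarrow{(c_-,d^1_-)}\mathcal A\oplus\mathcal B^1\to\operatorname{coker}(c_-,d^1_-)$. $T$ and $T^{-1}$ are mutually inverse equivalences between diads and triads. *)

From HB Require Import structures.
From mathcomp Require Import all_boot all_algebra.
Set Implicit Arguments. Unset Strict Implicit. Unset Printing Implicit Defensive.
Import GRing.Theory.
Local Open Scope ring_scope.

Record abcat := AbCat {
  ob :> Type;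
  hom : ob -> ob -> zmodType;
  comp : forall X Y Z : ob, hom Y Z -> hom X Y -> hom X Z;
  idm : forall X : ob, hom X X;
  compA : forall X Y Z W (f : hom Z W) (g : hom Y Z) (h : hom X Y),
      comp f (comp g h) = comp (comp f g) h;
  comp1m : forall X Y (f : hom X Y), comp (idm Y) f = f;
  compm1 : forall X Y (f : hom X Y), comp f (idm X) = f;
  compDl : forall X Y Z (f g : hom Y Z) (h : hom X Y),
      comp (f + g) h = comp f h + comp g h;
  compDr : forall X Y Z (f : hom Y Z) (g h : hom X Y),
      comp f (g + h) = comp f g + comp f h;
  zobj : ob;
  zobj_init : forall X (f : hom zobj X), f = 0;
  zobj_term : forall X (f : hom X zobj), f = 0;
  bip : ob -> ob -> ob;
  bi1 : forall X Y, hom X (bip X Y);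
  bi2 : forall X Y, hom Y (bip X Y);
  bp1 : forall X Y, hom (bip X Y) X;
  bp2 : forall X Y, hom (bip X Y) Y;
  bp1i1 : forall X Y, comp (bp1 X Y) (bi1 X Y) = idm X;
  bp2i2 : forall X Y, comp (bp2 X Y) (bi2 X Y) = idm Y;
  bp1i2 : forall X Y, comp (bp1 X Y) (bi2 X Y) = 0;
  bp2i1 : forall X Y, comp (bp2 X Y) (bi1 X Y) = 0;
  bsum : forall X Y, comp (bi1 X Y) (bp1 X Y) + comp (bi2 X Y) (bp2 X Y)
                     = idm (bip X Y);
  kerO : forall X Y, hom X Y -> ob;
  kerI : forall X Y (f : hom X Y), hom (kerO f) X;
  kerI0 : forall X Y (f : hom X Y), comp f (kerI f) = 0;
  kerLift : forall X Y (f : hom X Y) W, hom W X -> hom W (kerO f);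
  kerLiftK : forall X Y (f : hom X Y) W (g : hom W X),
      comp f g = 0 -> comp (kerI f) (kerLift f g) = g;
  kerI_mono : forall X Y (f : hom X Y) W (u v : hom W (kerO f)),
      comp (kerI f) u = comp (kerI f) v -> u = v;
  cokO : forall X Y, hom X Y -> ob;
  cokP : forall X Y (f : hom X Y), hom Y (cokO f);
  cokP0 : forall X Y (f : hom X Y), comp (cokP f) f = 0;
  cokDesc : forall X Y (f : hom X Y) W, hom Y W -> hom (cokO f) W;
  cokDescK : forall X Y (f : hom X Y) W (g : hom Y W),
      comp g f = 0 -> comp (cokDesc f g) (cokP f) = g;
  cokP_epi : forall X Y (f : hom X Y) W (u v : hom (cokO f) W),
      comp u (cokP f) = comp v (cokP f) -> u = v;
  (* every mono is the kernel of its cokernel *)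
  mono_normal : forall X Y (m : hom X Y),
      (forall W (g : hom W X), comp m g = 0 -> g = 0) ->
      forall W (g : hom W Y), comp (cokP m) g = 0 -> exists u, comp m u = g;
  (* every epi is the cokernel of its kernel *)
  epi_normal : forall X Y (e : hom X Y),
      (forall W (g : hom Y W), comp g e = 0 -> g = 0) ->
      forall W (g : hom X W), comp g (kerI e) = 0 -> exists u, comp u e = g
}.

Arguments hom {C} X Y : rename.
Arguments comp {C X Y Z} f g : rename.
Arguments idm {C} X : rename.
Arguments bip {C} X Y : rename.
Arguments bi1 {C X Y} : rename.
Arguments bi2 {C X Y} : rename.
Arguments bp1 {C X Y} : rename.
Arguments bp2 {C X Y} : rename.
Arguments kerO {C X Y} f : rename.
Arguments kerI {C X Y} f : rename.
Arguments kerLift {C X Y} f {W} g : rename.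
Arguments cokO {C X Y} f : rename.
Arguments cokP {C X Y} f : rename.
Arguments cokDesc {C X Y} f {W} g : rename.

Section Defs.
Variable C : abcat.

Definition is_mono {X Y : C} (m : hom X Y) :=
  forall W (g : hom W X), comp m g = 0 -> g = 0.
Definition is_epi {X Y : C} (e : hom X Y) :=
  forall W (g : hom Y W), comp g e = 0 -> g = 0.
Definition is_iso {X Y : C} (f : hom X Y) :=
  exists g : hom Y X, comp g f = idm X /\ comp f g = idm Y.

Definition pairm {W X Y : C} (f : hom W X) (g : hom W Y) : hom W (bip X Y) :=
  comp bi1 f + comp bi2 g.
Definition copairm {W X Y : C} (f : hom X W) (g : hom Y W) : hom (bip X Y) W :=
  comp f bp1 + comp g bp2.

(* D = (F_L --(a_L,b_L)--> A (+) B --(a_R,b_R)--> F_R) *)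
Record diad := Diad {
  dFL : C; dA : C; dB : C; dFR : C;
  daL : hom dFL dA; dbL : hom dFL dB;
  daR : hom dA dFR; dbR : hom dB dFR }.

Definition Lmap (D : diad) := pairm (daL D) (dbL D).
Definition Rmap (D : diad) := copairm (daR D) (dbR D).

Definition is_diad (D : diad) :=
  [/\ comp (Rmap D) (Lmap D) = 0, is_mono (daL D) & is_epi (daR D)].

Definition diad_mor_comm (D D' : diad) (fL : hom (dFL D) (dFL D'))
  (fA : hom (dA D) (dA D')) (fB : hom (dB D) (dB D')) (fR : hom (dFR D) (dFR D')) :=
  [/\ comp fA (daL D) = comp (daL D') fL, comp fB (dbL D) = comp (dbL D') fL,
      comp fR (daR D) = comp (daR D') fA & comp fR (dbR D) = comp (dbR D') fB].

Definition diad_iso (D D' : diad) :=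
  exists fL fA fB fR, diad_mor_comm (D := D) (D' := D') fL fA fB fR /\
    [/\ is_iso fL, is_iso fA, is_iso fB & is_iso fR].

(* 0 -> F_- --(c_-,d1_-,d2_-)--> A (+) B1 (+) B2 --(c_+,d1_+,d2_+)--> F_+ -> 0 *)
Record triad := Triad {
  tFm : C; tA : C; tB1 : C; tB2 : C; tFp : C;
  tcm : hom tFm tA; td1m : hom tFm tB1; td2m : hom tFm tB2;
  tcp : hom tA tFp; td1p : hom tB1 tFp; td2p : hom tB2 tFp }.

Definition Tin (t : triad) : hom (tFm t) (bip (tA t) (bip (tB1 t) (tB2 t))) :=
  pairm (tcm t) (pairm (td1m t) (td2m t)).
Definition Tout (t : triad) : hom (bip (tA t) (bip (tB1 t) (tB2 t))) (tFp t) :=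
  copairm (tcp t) (copairm (td1p t) (td2p t)).

Definition is_triad (t : triad) :=
  [/\ comp (Tout t) (Tin t) = 0, is_mono (Tin t), is_epi (Tout t) &
      (forall W (g : hom W (bip (tA t) (bip (tB1 t) (tB2 t)))),
          comp (Tout t) g = 0 -> exists u, comp (Tin t) u = g)] /\
  [/\ is_mono (pairm (tcm t) (td1m t)), is_mono (pairm (tcm t) (td2m t)),
      is_epi (copairm (tcp t) (td1p t)) & is_epi (copairm (tcp t) (td2p t))].

Section TDef.
Variable D : diad.
Definition kerR := kerO (Rmap D).
Definition iotaA : hom kerR (dA D) := comp bp1 (kerI (Rmap D)).
Definition iotaB : hom kerR (dB D) := comp bp2 (kerI (Rmap D)).
Definition Lk : hom (dFL D) kerR := kerLift (Rmap D) (Lmap D).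
Definition HD := cokO Lk.
Definition hD : hom kerR HD := cokP Lk.
Definition cokL := cokO (Lmap D).
Definition piA : hom (dA D) cokL := comp (cokP (Lmap D)) bi1.
Definition piB : hom (dB D) cokL := comp (cokP (Lmap D)) bi2.
Definition kD : hom HD cokL := cokDesc Lk (comp (cokP (Lmap D)) (kerI (Rmap D))).
End TDef.

Definition T (D : diad) : triad :=
  @Triad (kerR D) (dA D) (dB D) (HD D) (cokL D)
    (iotaA D) (iotaB D) (hD D) (piA D) (piB D) (- kD D).

Definition r (t : triad) : triad :=
  @Triad (tFm t) (tA t) (tB2 t) (tB1 t) (tFp t)
    (tcm t) (td2m t) (td1m t) (tcp t) (td2p t) (td1p t).

Definition Tinv (t : triad) : diad :=
  let M := pairm (tcm t) (td1m t) in
  @Diad (kerO (td2m t)) (tA t) (tB1 t) (cokO M)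
    (comp (tcm t) (kerI (td2m t))) (comp (td1m t) (kerI (td2m t)))
    (comp (cokP M) bi1) (comp (cokP M) bi2).

Section DPrime.
Variable D : diad.
Definition aL' : hom (kerO (daR D)) (dA D) := kerI (daR D).
Definition aR' : hom (dA D) (cokO (daL D)) := cokP (daL D).
Definition aL'0 : hom (kerO (daR D)) (kerR D) := kerLift (Rmap D) (pairm aL' 0).
Definition bL' : hom (kerO (daR D)) (HD D) := comp (hD D) aL'0.
Definition qL : hom (cokL D) (cokO (daL D)) := cokDesc (Lmap D) (comp aR' bp1).
Definition bR' : hom (HD D) (cokO (daL D)) := - comp qL (kD D).

Definition Dprime : diad :=
  @Diad (kerO (daR D)) (dA D) (HD D) (cokO (daL D)) aL' bL' aR' bR'.
End DPrime.

End Defs.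

From mathcomp Require Import all_boot all_algebra.
Set Implicit Arguments. Unset Strict Implicit. Unset Printing Implicit Defensive.
Import GRing.Theory.
Local Open Scope ring_scope.

(* Going through T, the reflection and T^{-1} replaces the diad by
   ker(iota_B) --> A (+) H(D) --> coker(iota_A, h), with iota_A, iota_B, h the
   maps out of ker R.  An element (a, b) of ker R with b = 0 is just an element
   a of ker a_R, so iota_A identifies ker(iota_B) with ker a_R.  Dually, modulo
   the image of (iota_A, h) every class of H(D) becomes the class of an element
   of A, and elements of A die exactly when they come from F_L (the B-part of
   an element of ker R is killed by h), so coker(iota_A, h) is coker a_L. *)

Section Preadditive.
Variable C : abcat.

Lemma comp0m (X Y Z : C) (f : hom X Y) : comp (0 : hom Y Z) f = 0.
Proof.
have E := compDl (0 : hom Y Z) 0 f; rewrite addr0 in E.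
by apply: (addrI (comp 0 f)); rewrite addr0 -E.
Qed.

Lemma compm0 (X Y Z : C) (f : hom Y Z) : comp f (0 : hom X Y) = 0.
Proof.
have E := compDr f (0 : hom X Y) 0; rewrite addr0 in E.
by apply: (addrI (comp f 0)); rewrite addr0 -E.
Qed.

Lemma compNm (X Y Z : C) (f : hom Y Z) (g : hom X Y) :
  comp (- f) g = - comp f g.
Proof. by apply/eqP; rewrite -subr_eq0 opprK -compDl addNr comp0m. Qed.

Lemma compmN (X Y Z : C) (f : hom Y Z) (g : hom X Y) :
  comp f (- g) = - comp f g.
Proof. by apply/eqP; rewrite -subr_eq0 opprK -compDr addNr compm0. Qed.

Lemma bp1_pairm (W X Y : C) (f : hom W X) (g : hom W Y) :
  comp bp1 (pairm f g) = f.
Proof. by rewrite /pairm compDr !compA bp1i1 bp1i2 comp1m comp0m addr0. Qed.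

Lemma bp2_pairm (W X Y : C) (f : hom W X) (g : hom W Y) :
  comp bp2 (pairm f g) = g.
Proof. by rewrite /pairm compDr !compA bp2i1 bp2i2 comp1m comp0m add0r. Qed.

Lemma copairm_bi1 (W X Y : C) (f : hom X W) (g : hom Y W) :
  comp (copairm f g) bi1 = f.
Proof. by rewrite /copairm compDl -!compA bp1i1 bp2i1 compm1 compm0 addr0. Qed.

Lemma copairm_bi2 (W X Y : C) (f : hom X W) (g : hom Y W) :
  comp (copairm f g) bi2 = g.
Proof. by rewrite /copairm compDl -!compA bp1i2 bp2i2 compm1 compm0 add0r. Qed.

Lemma pairm_bp (W X Y : C) (x : hom W (bip X Y)) :
  pairm (comp bp1 x) (comp bp2 x) = x.
Proof. by rewrite /pairm !compA -compDl bsum comp1m. Qed.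

Lemma comp_pairm (V W X Y : C) (f : hom W X) (g : hom W Y) (h : hom V W) :
  comp (pairm f g) h = pairm (comp f h) (comp g h).
Proof. by rewrite /pairm compDl -!compA. Qed.

Lemma copairm_pairm (V W X Y : C) (f : hom X W) (g : hom Y W)
    (a : hom V X) (b : hom V Y) :
  comp (copairm f g) (pairm a b) = comp f a + comp g b.
Proof. by rewrite /copairm compDl -!compA !bp1_pairm !bp2_pairm. Qed.

Lemma is_iso_idm (X : C) : is_iso (idm X).
Proof. by exists (idm X); rewrite comp1m. Qed.

Lemma kerLift_is_iso (X Y X' Y' : C) (f : hom X Y) (g : hom X' Y')
    (p : hom (kerO g) X) (q : hom (kerO f) X') :
  comp f p = 0 -> comp g q = 0 ->
  comp q (kerLift f p) = kerI g -> comp p (kerLift g q) = kerI f ->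
  is_iso (kerLift f p).
Proof.
move=> fp0 gq0 qp pq; exists (kerLift g q); split; apply: kerI_mono.
  by rewrite compm1 compA kerLiftK.
by rewrite compm1 compA kerLiftK.
Qed.

Lemma cokDesc_is_iso (X Y X' Y' : C) (f : hom X Y) (g : hom X' Y')
    (p : hom Y (cokO g)) (q : hom Y' (cokO f)) :
  comp p f = 0 -> comp q g = 0 ->
  comp (cokDesc f p) q = cokP g -> comp (cokDesc g q) p = cokP f ->
  is_iso (cokDesc f p).
Proof.
move=> pf0 qg0 pq qp; exists (cokDesc g q); split; apply: cokP_epi.
  by rewrite comp1m -compA cokDescK.
by rewrite comp1m -compA cokDescK.
Qed.

End Preadditive.

Section Reflection.
Variables (C : abcat) (D : diad C).
Hypothesis RL0 : comp (Rmap D) (Lmap D) = 0.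

Lemma kerI_Rmap : kerI (Rmap D) = pairm (iotaA D) (iotaB D).
Proof. by rewrite /iotaA /iotaB pairm_bp. Qed.

Lemma daR_iotaA : comp (daR D) (iotaA D) = - comp (dbR D) (iotaB D).
Proof.
by apply/eqP; rewrite -addr_eq0 -copairm_pairm -kerI_Rmap kerI0.
Qed.

Lemma iotaA_Lk : comp (iotaA D) (Lk D) = daL D.
Proof. by rewrite /iotaA -compA kerLiftK // /Lmap bp1_pairm. Qed.

Lemma kD_hD : comp (kD D) (hD D) = comp (cokP (Lmap D)) (kerI (Rmap D)).
Proof. by apply: cokDescK; rewrite -compA kerLiftK // cokP0. Qed.

Lemma qL_cokP : comp (qL D) (cokP (Lmap D)) = comp (aR' D) bp1.
Proof. by apply: cokDescK; rewrite -compA /Lmap bp1_pairm cokP0. Qed.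

Lemma bR'_hD : comp (bR' D) (hD D) = - comp (aR' D) (iotaA D).
Proof. by rewrite /bR' compNm -compA kD_hD compA qL_cokP -compA. Qed.

Lemma kerI_aL'0 : comp (kerI (Rmap D)) (aL'0 D) = pairm (aL' D) 0.
Proof. by apply: kerLiftK; rewrite copairm_pairm compm0 addr0 kerI0. Qed.

Lemma iotaA_aL'0 : comp (iotaA D) (aL'0 D) = aL' D.
Proof. by rewrite /iotaA -compA kerI_aL'0 bp1_pairm. Qed.

Lemma iotaB_aL'0 : comp (iotaB D) (aL'0 D) = 0.
Proof. by rewrite /iotaB -compA kerI_aL'0 bp2_pairm. Qed.

Definition isoL : hom (kerO (iotaB D)) (kerO (daR D)) :=
  kerLift (daR D) (comp (iotaA D) (kerI (iotaB D))).

Lemma daR_iotaA_kerI : comp (daR D) (comp (iotaA D) (kerI (iotaB D))) = 0.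
Proof. by rewrite compA daR_iotaA compNm -compA kerI0 compm0 oppr0. Qed.

Lemma aL'_isoL : comp (aL' D) isoL = comp (iotaA D) (kerI (iotaB D)).
Proof. exact: kerLiftK daR_iotaA_kerI. Qed.

Lemma aL'0_isoL : comp (aL'0 D) isoL = kerI (iotaB D).
Proof.
apply: kerI_mono; rewrite compA kerI_aL'0 comp_pairm comp0m aL'_isoL.
by rewrite kerI_Rmap comp_pairm kerI0.
Qed.

Lemma isoL_is_iso : is_iso isoL.
Proof.
apply: kerLift_is_iso daR_iotaA_kerI iotaB_aL'0 aL'0_isoL _.
by rewrite -compA kerLiftK ?iotaA_aL'0 ?iotaB_aL'0.
Qed.

Let M := pairm (iotaA D) (hD D).

Definition isoR : hom (cokO M) (cokO (daL D)) :=
  cokDesc M (copairm (aR' D) (bR' D)).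

Lemma copairm_M : comp (copairm (aR' D) (bR' D)) M = 0.
Proof. by rewrite copairm_pairm bR'_hD addrN. Qed.

Lemma cokP_M_daL : comp (comp (cokP M) bi1) (daL D) = 0.
Proof.
rewrite -compA.
have ->: comp bi1 (daL D) = comp M (Lk D).
  by rewrite comp_pairm iotaA_Lk cokP0 /pairm compm0 addr0.
by rewrite compA cokP0 comp0m.
Qed.

(* In coker M the class of (0, h x) equals that of (- iota_A x, 0). *)
Lemma cokDesc_daL_bR' :
  comp (cokDesc (daL D) (comp (cokP M) bi1)) (bR' D) = comp (cokP M) bi2.
Proof.
apply: cokP_epi; rewrite -compA bR'_hD compmN compA cokDescK ?cokP_M_daL //.
rewrite -[RHS]compA.
have ->: comp bi2 (hD D) = M - comp bi1 (iotaA D) by rewrite addrC addKr.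
by rewrite compDr compmN cokP0 add0r compA.
Qed.

Lemma isoR_bi1 : comp isoR (comp (cokP M) bi1) = aR' D.
Proof. by rewrite compA cokDescK ?copairm_M // copairm_bi1. Qed.

Lemma isoR_bi2 : comp isoR (comp (cokP M) bi2) = bR' D.
Proof. by rewrite compA cokDescK ?copairm_M // copairm_bi2. Qed.

Lemma isoR_is_iso : is_iso isoR.
Proof.
apply: cokDesc_is_iso copairm_M cokP_M_daL _ _; first exact: isoR_bi1.
rewrite /copairm compDr !compA cokDescK ?cokP_M_daL // cokDesc_daL_bR'.
by rewrite -!compA -compDr bsum compm1.
Qed.

End Reflection.

Theorem mainTheorem12 (C : abcat) (D : diad C) :
  is_diad D -> diad_iso (Tinv (r (T D))) (Dprime D).
Proof.
case=> RL0 _ _.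
exists (isoL D), (idm _), (idm _), (isoR D); split.
  split=> /=.
  - by rewrite comp1m aL'_isoL.
  - by rewrite comp1m /bL' -compA aL'0_isoL.
  - by rewrite compm1 isoR_bi1.
  - by rewrite compm1 isoR_bi2.
split; [exact: isoL_is_iso | exact: is_iso_idm | exact: is_iso_idm |].
exact: isoR_is_iso.
Qed.
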